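(* Let $d_n$ be the number of FQ-legal index sets contained in $\{1,\dots,n\}$ (including the empty set). Let $r_1\approx1.39704$ be the largest (real) root of $r^7-r^6-r^2-1=0$ and $r_2\approx1.07378$ the modulus of the next largest roots (a complex conjugate pair; all other roots have modulus at most $1$). Then there is a constant $\beta_1>0$ such that \[ d_n=\beta_1 r_1^n\left[1+O\bigl((r_2/r_1)^n\bigr)\right]. \]
   Context: An FQ-legal index set is a finite set $S$ of positive integers such that no two elements of $S$ differ by $1$, $3$ or $4$, and $S$ does not contain both $1$ and $3$. (These are exactly the index sets of FQ-legal decompositions with respect to the Fibonacci Quilt sequence.) *)

From Stdlib Require Import Reals List Arith Bool.
Import ListNotations.

(** FQ-legal index sets, represented as duplicate-free lists of positive
    integers.  S is FQ-legal iff no two elements differ by 1, 3 or 4 and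
    S does not contain both 1 and 3. *)
Definition memb (x : nat) (S : list nat) : bool := existsb (Nat.eqb x) S.

Definition fq_legalb (S : list nat) : bool :=
  forallb (fun a =>
    forallb (fun b =>
      negb (Nat.eqb b (a + 1) || Nat.eqb b (a + 3) || Nat.eqb b (a + 4))) S) S
  && negb (memb 1 S && memb 3 S).

(** All sublists of a list (for a duplicate-free list l these are exactly the
    subsets of the set of elements of l, each listed once). *)
Fixpoint sublists {A : Type} (l : list A) : list (list A) :=
  match l with
  | [] => [[]]
  | x :: t => let r := sublists t in r ++ map (cons x) r
  end.

Definition d (n : nat) : nat :=
  length (filter fq_legalb (sublists (seq 1 n))).

Open Scope R_scope.

(** Minimal complex arithmetic on R*R, to talk about complex roots of
    r^7 - r^6 - r^2 - 1. *)
Definition Cmul (z w : R * R) : R * R :=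
  (fst z * fst w - snd z * snd w, fst z * snd w + snd z * fst w).
Fixpoint Cpow (z : R * R) (n : nat) : R * R :=
  match n with O => (1, 0) | S k => Cmul z (Cpow z k) end.
Definition Cmod (z : R * R) : R := sqrt (fst z ^ 2 + snd z ^ 2).

Definition FQpolyC (z : R * R) : R * R :=
  (fst (Cpow z 7) - fst (Cpow z 6) - fst (Cpow z 2) - 1,
   snd (Cpow z 7) - snd (Cpow z 6) - snd (Cpow z 2)).
Definition is_FQroot (z : R * R) : Prop := FQpolyC z = (0, 0).

Definition FQpolyR (r : R) : R := r ^ 7 - r ^ 6 - r ^ 2 - 1.

(* Splitting the legal sets by their smallest elements, and recording which points
   each choice forbids, gives d (n + 7) = d (n + 6) + d (n + 2) + d n.  Dividing the
   characteristic polynomial by X - r1 leaves a sextic Q with positive coefficients;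
   applied to d as a shift operator, Q yields a sequence multiplied by r1 at each
   step, which determines beta1 > 0 such that e n := d n - beta1 r1^n is annihilated
   by Q.  Locating the complex roots numerically splits Q over R into three factors
   (X - a)^2 + b^2, the first of largest modulus |a1 + i b1| <= r2.  A solution of
   x (n+2) - 2 a x (n+1) + |a + i b|^2 x n = f n has an energy
   (x (n+1) - a x n)^2 + b^2 (x n)^2 that is multiplied by |a + i b|^2 at each step,
   up to the forcing term; peeling off the three factors bounds e n by
   C |a1 + i b1|^n. *)

From Stdlib Require Import Reals List Arith Bool Lia Lra Psatz ZArith Classical.

(** * The recurrence for d *)

Local Open Scope nat_scope.

Definition allowed_gap (a b : nat) : bool :=
  negb ((b =? a + 1) || (b =? a + 3) || (b =? a + 4)).

Definition gaps_allowed (s : list nat) : bool :=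
  forallb (fun a => forallb (allowed_gap a) s) s.

Definition avoids (F : nat -> bool) (s : list nat) : bool :=
  gaps_allowed s && forallb (fun y => negb (F y)) s.

Definition count_avoiding (k L : nat) (F : nat -> bool) : nat :=
  length (filter (avoids F) (sublists (seq k L))).

Definition forbid_gaps_from (F : nat -> bool) (k : nat) : nat -> bool :=
  fun y => F y || (y =? k + 1) || (y =? k + 3) || (y =? k + 4).

Definition nothing_forbidden : nat -> bool := fun _ => false.

Definition legal_count (L : nat) : nat := count_avoiding 0 L nothing_forbidden.

Lemma in_sublists_incl {A : Type} (l s : list A) : In s (sublists l) -> incl s l.
Proof.
  revert s; induction l as [|x t IH]; simpl; intros s Hs.
  - destruct Hs as [<-|[]]. apply incl_nil_l.
  - apply in_app_or in Hs as [Hs|Hs].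
    + apply incl_tl, IH, Hs.
    + apply in_map_iff in Hs as [s' [<- Hs']].
      apply incl_cons; [left; reflexivity | apply incl_tl, IH, Hs'].
Qed.

Lemma sublists_map {A B : Type} (f : A -> B) (l : list A) :
  sublists (map f l) = map (map f) (sublists l).
Proof. induction l; simpl; auto. rewrite IHl, map_app, !map_map. reflexivity. Qed.

Lemma forallb_andb {A : Type} (f g : A -> bool) (s : list A) :
  forallb (fun a => f a && g a) s = forallb f s && forallb g s.
Proof.
  induction s as [|a s IH]; simpl; auto.
  rewrite IH. destruct (f a), (g a), (forallb f s); reflexivity.
Qed.

Lemma forallb_ext_in {A : Type} (f g : A -> bool) (s : list A) :
  (forall x, In x s -> f x = g x) -> forallb f s = forallb g s.
Proof.
  induction s as [|a s IH]; simpl; intros H; auto.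
  rewrite H, IH by auto. reflexivity.
Qed.

Lemma forallb_map {A B : Type} (f : B -> bool) (h : A -> B) (l : list A) :
  forallb f (map h l) = forallb (fun x => f (h x)) l.
Proof. induction l; simpl; auto. rewrite IHl; reflexivity. Qed.

Lemma length_filter_ext_in {A : Type} (p q : A -> bool) (l : list A) :
  (forall x, In x l -> p x = q x) -> length (filter p l) = length (filter q l).
Proof. intros H. rewrite (filter_ext_in _ _ _ H). reflexivity. Qed.

Lemma length_filter_map {A B : Type} (p : B -> bool) (h : A -> B) (l : list A) :
  length (filter p (map h l)) = length (filter (fun x => p (h x)) l).
Proof. rewrite filter_map_swap, length_map. reflexivity. Qed.

Lemma negb_memb (x : nat) (s : list nat) :
  negb (memb x s) = forallb (fun y => negb (y =? x)) s.
Proof.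
  unfold memb. induction s as [|a s IH]; simpl; auto.
  rewrite <- IH, Nat.eqb_sym. destruct (a =? x); reflexivity.
Qed.

Lemma allowed_gap_ge (x y : nat) : y <= x -> allowed_gap x y = true.
Proof. intros H. unfold allowed_gap. rewrite !(proj2 (Nat.eqb_neq _ _)) by lia. reflexivity. Qed.

Lemma gaps_allowed_cons (x : nat) (s : list nat) : (forall y, In y s -> x < y) ->
  gaps_allowed (x :: s) = forallb (allowed_gap x) s && gaps_allowed s.
Proof.
  intros Hs. unfold gaps_allowed. simpl.
  rewrite allowed_gap_ge, forallb_andb by lia.
  rewrite (proj2 (forallb_forall (fun a => allowed_gap a x) s))
    by (intros y Hy; apply allowed_gap_ge; specialize (Hs y Hy); lia).
  reflexivity.
Qed.

Lemma avoids_cons (F : nat -> bool) (k : nat) (s : list nat) :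
  (forall y, In y s -> k < y) ->
  avoids F (k :: s) = negb (F k) && avoids (forbid_gaps_from F k) s.
Proof.
  intros Hs. unfold avoids. rewrite gaps_allowed_cons by exact Hs. simpl.
  rewrite (forallb_ext_in (fun y => negb (forbid_gaps_from F k y))
                          (fun y => negb (F y) && allowed_gap k y))
    by (intros y _; unfold forbid_gaps_from, allowed_gap; destruct (F y); reflexivity).
  rewrite forallb_andb.
  destruct (F k), (forallb (allowed_gap k) s), (gaps_allowed s), (forallb _ s); reflexivity.
Qed.

Lemma in_sublists_seq_ge (k L : nat) (s : list nat) (y : nat) :
  In s (sublists (seq k L)) -> In y s -> k <= y.
Proof. intros Hs Hy. apply in_sublists_incl in Hs. apply Hs, in_seq in Hy. lia. Qed.

Lemma count_avoiding_succ (k L : nat) (F : nat -> bool) :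
  count_avoiding k (S L) F =
  count_avoiding (S k) L F + (if F k then 0 else count_avoiding (S k) L (forbid_gaps_from F k)).
Proof.
  unfold count_avoiding. simpl. rewrite filter_app, length_app, length_filter_map.
  f_equal.
  rewrite (length_filter_ext_in _ (fun s => negb (F k) && avoids (forbid_gaps_from F k) s)).
  - destruct (F k); simpl; [rewrite filter_false |]; reflexivity.
  - intros s Hs. apply avoids_cons. intros y Hy.
    pose proof (in_sublists_seq_ge _ _ _ _ Hs Hy). lia.
Qed.

Lemma count_avoiding_forbidden (k L : nat) (F : nat -> bool) :
  F k = true -> count_avoiding k (S L) F = count_avoiding (S k) L F.
Proof. intros H. rewrite count_avoiding_succ, H. lia. Qed.

Lemma count_avoiding_allowed (k L : nat) (F : nat -> bool) : F k = false ->
  count_avoiding k (S L) F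
  = count_avoiding (S k) L F + count_avoiding (S k) L (forbid_gaps_from F k).
Proof. intros H. rewrite count_avoiding_succ, H. reflexivity. Qed.

Lemma count_avoiding_ext (k L : nat) (F F' : nat -> bool) :
  (forall y, k <= y -> F y = F' y) -> count_avoiding k L F = count_avoiding k L F'.
Proof.
  intros H. unfold count_avoiding, avoids. apply length_filter_ext_in. intros s Hs. f_equal.
  apply forallb_ext_in. intros y Hy. rewrite H by exact (in_sublists_seq_ge _ _ _ _ Hs Hy).
  reflexivity.
Qed.

Lemma gaps_allowed_map_S (s : list nat) : gaps_allowed (map S s) = gaps_allowed s.
Proof.
  unfold gaps_allowed. rewrite forallb_map. apply forallb_ext_in. intros a _.
  rewrite forallb_map. reflexivity.
Qed.

Lemma count_avoiding_nothing (k L : nat) :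
  count_avoiding k L nothing_forbidden = legal_count L.
Proof.
  induction k as [|k IH]; [reflexivity |]. rewrite <- IH.
  unfold count_avoiding, avoids. rewrite <- seq_shift, sublists_map, length_filter_map.
  apply length_filter_ext_in. intros s _. rewrite gaps_allowed_map_S, forallb_map. reflexivity.
Qed.

Lemma forbid_gaps_from_far (F : nat -> bool) (k y : nat) :
  k + 4 < y -> forbid_gaps_from F k y = F y.
Proof.
  intros H. unfold forbid_gaps_from. rewrite !(proj2 (Nat.eqb_neq _ _)) by lia.
  destruct (F y); reflexivity.
Qed.

(* Choosing or skipping the smallest points 0 and 2 (1 is forbidden once 0 is
   chosen) splits the count into the three terms of the recurrence. *)
Lemma legal_count_rec (L : nat) :
  legal_count (L + 7) = legal_count (L + 6) + legal_count (L + 2) + legal_count L.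
Proof.
  set (F1 := forbid_gaps_from nothing_forbidden 0).
  set (F2 := forbid_gaps_from F1 2).
  assert (H1 : count_avoiding 1 (L + 6) F1 = legal_count (L + 2) + legal_count L).
  { replace (L + 6) with (S (S (S (S (L + 2))))) by lia.
    rewrite count_avoiding_forbidden, count_avoiding_allowed by reflexivity.
    rewrite !count_avoiding_forbidden by reflexivity.
    replace (L + 2) with (S (S L)) at 2 by lia.
    rewrite !count_avoiding_forbidden by reflexivity.
    rewrite (count_avoiding_ext _ _ F1 nothing_forbidden),
      (count_avoiding_ext _ _ F2 nothing_forbidden), !count_avoiding_nothing by
      (intros y Hy; unfold F2, F1; rewrite !forbid_gaps_from_far by lia; reflexivity).
    reflexivity. }
  unfold legal_count at 1. replace (L + 7) with (S (L + 6)) by lia.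
  rewrite count_avoiding_allowed, count_avoiding_nothing by reflexivity.
  fold F1. rewrite H1. lia.
Qed.

Lemma fq_legalb_split (s : list nat) :
  fq_legalb s = gaps_allowed s && negb (memb 1 s && memb 3 s).
Proof. reflexivity. Qed.

Lemma fq_legalb_no_one (s : list nat) : (forall y, In y s -> 1 < y) ->
  fq_legalb s = avoids nothing_forbidden s.
Proof.
  intros Hs. rewrite fq_legalb_split. unfold avoids.
  replace (memb 1 s) with false.
  - rewrite (proj2 (forallb_forall _ s)) by reflexivity. destruct (gaps_allowed s); reflexivity.
  - apply eq_sym, negb_true_iff. rewrite negb_memb. apply forallb_forall.
    intros y Hy. specialize (Hs y Hy). apply negb_true_iff, Nat.eqb_neq. lia.
Qed.

(* Once 1 is chosen, 2, 4, 5 are excluded by the gap rule and 3 by the extra rule. *)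
Definition forbid_after_one (y : nat) : bool := (2 <=? y) && (y <=? 5).

Lemma fq_legalb_one (s : list nat) : (forall y, In y s -> 1 < y) ->
  fq_legalb (1 :: s) = avoids forbid_after_one s.
Proof.
  intros Hs. rewrite fq_legalb_split, gaps_allowed_cons by exact Hs.
  simpl memb. rewrite andb_true_l, negb_memb. unfold avoids.
  rewrite (forallb_ext_in (fun y => negb (forbid_after_one y))
             (fun y => allowed_gap 1 y && negb (y =? 3)))
    by (intros [|[|[|[|[|[|y]]]]]] _; reflexivity).
  rewrite forallb_andb.
  destruct (forallb (allowed_gap 1) s), (gaps_allowed s), (forallb _ s); reflexivity.
Qed.

Lemma d_add5 (j : nat) : d (j + 5) = legal_count (j + 4) + legal_count j.
Proof.
  unfold d. replace (j + 5) with (S (j + 4)) by lia. simpl.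
  rewrite filter_app, length_app, length_filter_map.
  assert (Hs : forall s, In s (sublists (seq 2 (j + 4))) -> forall y, In y s -> 1 < y)
    by (intros s Hs y Hy; pose proof (in_sublists_seq_ge _ _ _ _ Hs Hy); lia).
  rewrite (length_filter_ext_in _ (avoids nothing_forbidden))
    by (intros s H; exact (fq_legalb_no_one s (Hs s H))).
  rewrite (length_filter_ext_in (fun s => fq_legalb (1 :: s)) (avoids forbid_after_one))
    by (intros s H; exact (fq_legalb_one s (Hs s H))).
  fold (count_avoiding 2 (j + 4) nothing_forbidden) (count_avoiding 2 (j + 4) forbid_after_one).
  replace (j + 4) with (S (S (S (S j)))) at 2 by lia.
  rewrite !count_avoiding_forbidden by reflexivity.
  rewrite (count_avoiding_ext _ _ forbid_after_one nothing_forbidden), !count_avoiding_nothing.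
  - reflexivity.
  - intros y Hy. unfold forbid_after_one. rewrite (proj2 (Nat.leb_gt y 5)) by lia.
    apply andb_false_r.
Qed.

Lemma d_small : d 7 = d 6 + d 2 + d 0 /\ d 8 = d 7 + d 3 + d 1 /\ d 9 = d 8 + d 4 + d 2
  /\ d 10 = d 9 + d 5 + d 3 /\ d 11 = d 10 + d 6 + d 4.
Proof. vm_compute. repeat split. Qed.

Lemma d_rec (n : nat) : d (n + 7) = d (n + 6) + d (n + 2) + d n.
Proof.
  destruct (le_lt_dec 5 n) as [Hn|Hn].
  - destruct (Nat.le_exists_sub 5 n Hn) as [j [-> _]].
    pose proof (d_add5 (j + 7)). pose proof (d_add5 (j + 6)). pose proof (d_add5 (j + 2)).
    pose proof (d_add5 j). pose proof (legal_count_rec (j + 4)). pose proof (legal_count_rec j).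
    rewrite <- !Nat.add_assoc in *. cbn [Nat.add] in *. lia.
  - destruct d_small as (E7 & E8 & E9 & E10 & E11).
    destruct n as [|[|[|[|[|n]]]]];
      [exact E7 | exact E8 | exact E9 | exact E10 | exact E11 | lia].
Qed.

(** * Second-order recurrences with complex characteristic roots *)

Local Open Scope R_scope.

Lemma geometric_majorant (Q g : nat -> R) (lam c K rho : R) :
  0 <= lam < rho -> 0 <= c -> 0 <= K -> 0 <= Q 0%nat ->
  (forall n, Q (S n) <= lam * Q n + c * g n) -> (forall n, g n <= K * rho ^ n) ->
  forall n, Q n <= (Q 0%nat + c * K / (rho - lam)) * rho ^ n.
Proof.
  intros Hlam Hc HK HQ0 HQ Hg.
  set (D := Q 0%nat + c * K / (rho - lam)).
  assert (HD : Q 0%nat <= D)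
    by (unfold D; assert (0 <= c * K / (rho - lam)) by (apply Rle_mult_inv_pos; nra); lra).
  assert (Hstep : lam * D + c * K <= D * rho)
    by (assert (D * (rho - lam) = Q 0%nat * (rho - lam) + c * K) by (unfold D; field; lra); nra).
  induction n as [|n IH]; [simpl; lra |].
  eapply Rle_trans; [apply HQ |]. simpl.
  pose proof (Hg n). pose proof (pow_le rho n ltac:(lra)).
  assert (lam * Q n <= lam * (D * rho ^ n)) by (apply Rmult_le_compat_l; lra).
  assert (c * g n <= c * (K * rho ^ n)) by (apply Rmult_le_compat_l; lra).
  nra.
Qed.

Section QuadraticRecurrence.

Variables a b : R.

Definition quad_step (x : nat -> R) (n : nat) : R :=
  x (S (S n)) - 2 * a * x (S n) + (a ^ 2 + b ^ 2) * x n.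

(* |x (n+1) - (a + i b) x n|^2, multiplied by a^2 + b^2 at each step of the
   homogeneous recurrence. *)
Definition energy (x : nat -> R) (n : nat) : R :=
  (x (S n) - a * x n) ^ 2 + b ^ 2 * x n ^ 2.

Lemma energy_ge (x : nat -> R) (n : nat) : b ^ 2 * x n ^ 2 <= energy x n.
Proof. unfold energy. pose proof (pow2_ge_0 (x (S n) - a * x n)). lra. Qed.

Lemma energy_ge0 (x : nat -> R) (n : nat) : 0 <= energy x n.
Proof.
  pose proof (energy_ge x n). pose proof (pow2_ge_0 b). pose proof (pow2_ge_0 (x n)). nra.
Qed.

Lemma abs_le_of_energy_le (x : nat -> R) (sg D : R) : b <> 0 -> 0 <= sg ->
  (forall n, energy x n <= D * (sg ^ 2) ^ n) ->
  forall n, Rabs (x n) <= sqrt (D / b ^ 2) * sg ^ n.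
Proof.
  intros Hb Hsg HE n.
  assert (Hb2 : 0 < b ^ 2) by (simpl; rewrite Rmult_1_r; apply Rsqr_pos_lt, Hb).
  assert (HD : 0 <= D) by (specialize (HE 0%nat); pose proof (energy_ge0 x 0); simpl in HE; lra).
  assert (HK : 0 <= sqrt (D / b ^ 2) * sg ^ n)
    by (apply Rmult_le_pos; [apply sqrt_pos | apply pow_le; exact Hsg]).
  rewrite <- (Rabs_pos_eq _ HK). apply Rsqr_le_abs_0. unfold Rsqr.
  replace (sqrt (D / b ^ 2) * sg ^ n * (sqrt (D / b ^ 2) * sg ^ n))
    with (D / b ^ 2 * (sg ^ 2) ^ n)
    by (rewrite <- pow_mult, Nat.mul_comm, pow_mult,
          <- (sqrt_sqrt (D / b ^ 2)) at 1 by (apply Rle_mult_inv_pos; lra); ring).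
  apply (Rmult_le_reg_l (b ^ 2)); [exact Hb2 |].
  replace (b ^ 2 * (D / b ^ 2 * (sg ^ 2) ^ n)) with (D * (sg ^ 2) ^ n) by (field; lra).
  pose proof (energy_ge x n). specialize (HE n). nra.
Qed.

Lemma energy_succ (x : nat -> R) (n : nat) :
  energy x (S n) = (a ^ 2 + b ^ 2) * energy x n
    + 2 * quad_step x n * (a * x (S n) - (a ^ 2 + b ^ 2) * x n) + quad_step x n ^ 2.
Proof. unfold energy, quad_step. ring. Qed.

Lemma energy_succ_homog (x : nat -> R) (n : nat) : quad_step x n = 0 ->
  energy x (S n) = (a ^ 2 + b ^ 2) * energy x n.
Proof. intros H. rewrite energy_succ, H. ring. Qed.

Lemma energy_succ_le (x : nat -> R) (eta : R) (n : nat) : 0 < eta ->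
  energy x (S n)
  <= (1 + eta) * (a ^ 2 + b ^ 2) * energy x n + (1 + / eta) * quad_step x n ^ 2.
Proof.
  intros Heta. rewrite energy_succ.
  set (f := quad_step x n). set (y := a * x (S n) - (a ^ 2 + b ^ 2) * x n).
  assert (Hy : y ^ 2 <= (a ^ 2 + b ^ 2) * energy x n).
  { replace ((a ^ 2 + b ^ 2) * energy x n) with (y ^ 2 + (b * x (S n)) ^ 2)
      by (unfold y, energy; ring).
    pose proof (pow2_ge_0 (b * x (S n))). lra. }
  (* Young's inequality on the cross term *)
  assert (Hyoung : 2 * f * y <= eta * y ^ 2 + / eta * f ^ 2).
  { assert (E : eta * y ^ 2 + / eta * f ^ 2 - 2 * f * y = / eta * (eta * y - f) ^ 2)
      by (field; lra).
    pose proof (pow2_ge_0 (eta * y - f)). pose proof (Rinv_0_lt_compat _ Heta). nra. }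
  nra.
Qed.

Lemma quad_homog_bound (x : nat -> R) : b <> 0 -> (forall n, quad_step x n = 0) ->
  exists K, forall n, Rabs (x n) <= K * sqrt (a ^ 2 + b ^ 2) ^ n.
Proof.
  intros Hb Hx. exists (sqrt (energy x 0 / b ^ 2)).
  apply abs_le_of_energy_le; [exact Hb | apply sqrt_pos |].
  intros n. rewrite pow2_sqrt by nra.
  induction n as [|n IH]; [simpl; lra |].
  rewrite energy_succ_homog by apply Hx.
  change ((a ^ 2 + b ^ 2) ^ S n) with ((a ^ 2 + b ^ 2) * (a ^ 2 + b ^ 2) ^ n).
  pose proof (pow2_ge_0 a). pose proof (pow2_ge_0 b). nra.
Qed.

Lemma quad_inhomog_bound (x : nat -> R) (sg K : R) :
  b <> 0 -> a ^ 2 + b ^ 2 < sg ^ 2 -> 0 < sg ->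
  (forall n, Rabs (quad_step x n) <= K * sg ^ n) ->
  exists K', forall n, Rabs (x n) <= K' * sg ^ n.
Proof.
  intros Hb Hm Hsg Hf.
  set (m := a ^ 2 + b ^ 2) in *.
  assert (Hm0 : 0 < m) by (unfold m; pose proof (pow2_ge_0 a);
    assert (0 < b ^ 2) by (simpl; rewrite Rmult_1_r; apply Rsqr_pos_lt, Hb); lra).
  set (eta := (sg ^ 2 - m) / (2 * m)).
  assert (Heta : 0 < eta) by (apply Rdiv_lt_0_compat; lra).
  assert (HK : 0 <= K)
    by (specialize (Hf 0%nat); simpl in Hf; pose proof (Rabs_pos (quad_step x 0)); lra).
  eexists. apply abs_le_of_energy_le; [exact Hb | lra |].
  apply (geometric_majorant _ (fun n => quad_step x n ^ 2) ((1 + eta) * m) (1 + / eta) (K ^ 2)).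
  - split; [nra |]. unfold eta. field_simplify; lra.
  - pose proof (Rinv_0_lt_compat _ Heta). lra.
  - apply pow2_ge_0.
  - apply energy_ge0.
  - intros n. apply energy_succ_le, Heta.
  - intros n. specialize (Hf n). rewrite <- pow2_abs, <- pow_mult, Nat.mul_comm, pow_mult.
    rewrite <- Rpow_mult_distr. pose proof (Rabs_pos (quad_step x n)).
    apply pow_incr. lra.
Qed.

End QuadraticRecurrence.

(** * The sextic quotient of the characteristic polynomial *)

Definition fq_rec (u : nat -> R) : Prop :=
  forall n, u (7 + n)%nat = u (6 + n)%nat + u (2 + n)%nat + u n.

(* The sextic (X^7 - X^6 - X^2 - 1 - FQpolyR r) / (X - r), as a shift operator. *)
Definition fq_quotient (r : R) (x : nat -> R) (n : nat) : R :=
  x (6 + n)%nat + (r - 1) * x (5 + n)%nat + r * (r - 1) * x (4 + n)%nat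
  + r ^ 2 * (r - 1) * x (3 + n)%nat + r ^ 3 * (r - 1) * x (2 + n)%nat
  + (r ^ 4 * (r - 1) - 1) * x (1 + n)%nat + r * (r ^ 4 * (r - 1) - 1) * x n.

Definition root_quad (a b x : R) : R := (x - a) ^ 2 + b ^ 2.

Definition fq_factors (r a1 b1 a2 b2 a3 b3 : R) : Prop :=
  forall x, FQpolyR x = (x - r) * root_quad a1 b1 x * root_quad a2 b2 x * root_quad a3 b3 x.

Lemma fq_rec_pow (r : R) : FQpolyR r = 0 -> fq_rec (pow r).
Proof.
  unfold FQpolyR. intros Hr n. rewrite !pow_add.
  replace (r ^ 7) with (r ^ 6 + r ^ 2 + 1) by lra. ring.
Qed.

Lemma fq_rec_sub_scal (u v : nat -> R) (c : R) :
  fq_rec u -> fq_rec v -> fq_rec (fun n => u n - c * v n).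
Proof. intros Hu Hv n. rewrite Hu, Hv. ring. Qed.

Lemma fq_quotient_sub_scal (r c : R) (u v : nat -> R) (n : nat) :
  fq_quotient r (fun k => u k - c * v k) n = fq_quotient r u n - c * fq_quotient r v n.
Proof. unfold fq_quotient. ring. Qed.

Lemma fq_quotient_succ (r : R) (u : nat -> R) (n : nat) :
  fq_quotient r u (S n) = r * fq_quotient r u n
    + (u (7 + n)%nat - u (6 + n)%nat - u (2 + n)%nat - u n) - FQpolyR r * u n.
Proof. unfold fq_quotient, FQpolyR. cbn [Nat.add]. ring. Qed.

Lemma fq_quotient_geometric (r : R) (u : nat -> R) :
  FQpolyR r = 0 -> fq_rec u -> forall n, fq_quotient r u n = r ^ n * fq_quotient r u 0.
Proof.
  intros Hr Hu n. induction n as [|n IH]; [simpl; ring |].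
  rewrite fq_quotient_succ, Hu, Hr, IH. simpl. ring.
Qed.

Lemma gt1_of_quotient_coeff (r : R) : 1 < r ^ 4 * (r - 1) -> 1 < r.
Proof.
  intros Hr. destruct (Rle_lt_dec r 1) as [H | H]; [| exact H].
  assert (Hr4 : 0 <= r ^ 4) by (replace (r ^ 4) with ((r ^ 2) ^ 2) by ring; apply pow2_ge_0).
  assert (0 <= r ^ 4 * (1 - r)) by (apply Rmult_le_pos; lra). lra.
Qed.

Lemma fq_quotient_pos (r : R) (u : nat -> R) : 1 < r ^ 4 * (r - 1) ->
  (forall k, 0 <= u k) -> 0 < u 6%nat -> 0 < fq_quotient r u 0.
Proof.
  intros Hr Hu Hu6. pose proof (gt1_of_quotient_coeff r Hr) as Hr1.
  assert (0 < r ^ 2) by (apply pow_lt; lra). assert (0 < r ^ 3) by (apply pow_lt; lra).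
  unfold fq_quotient. cbn [Nat.add].
  pose proof (Hu 5%nat). pose proof (Hu 4%nat). pose proof (Hu 3%nat).
  pose proof (Hu 2%nat). pose proof (Hu 1%nat). pose proof (Hu 0%nat).
  assert (0 <= (r - 1) * u 5%nat) by (repeat apply Rmult_le_pos; lra).
  assert (0 <= r * (r - 1) * u 4%nat) by (repeat apply Rmult_le_pos; lra).
  assert (0 <= r ^ 2 * (r - 1) * u 3%nat) by (repeat apply Rmult_le_pos; lra).
  assert (0 <= r ^ 3 * (r - 1) * u 2%nat) by (repeat apply Rmult_le_pos; lra).
  assert (0 <= (r ^ 4 * (r - 1) - 1) * u 1%nat) by (repeat apply Rmult_le_pos; lra).
  assert (0 <= r * (r ^ 4 * (r - 1) - 1) * u 0%nat) by (repeat apply Rmult_le_pos; lra).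
  lra.
Qed.

Lemma quintic_coeffs_zero (d0 d1 d2 d3 d4 d5 : R) :
  (forall x : R, x = 0 \/ x = 1 \/ x = 2 \/ x = 3 \/ x = 4 \/ x = 5 ->
     d5 * x ^ 5 + d4 * x ^ 4 + d3 * x ^ 3 + d2 * x ^ 2 + d1 * x + d0 = 0) ->
  d0 = 0 /\ d1 = 0 /\ d2 = 0 /\ d3 = 0 /\ d4 = 0 /\ d5 = 0.
Proof.
  intros H.
  pose proof (H 0 ltac:(tauto)). pose proof (H 1 ltac:(tauto)). pose proof (H 2 ltac:(tauto)).
  pose proof (H 3 ltac:(tauto)). pose proof (H 4 ltac:(tauto)). pose proof (H 5 ltac:(tauto)).
  simpl in *. repeat split; lra.
Qed.

(* Both sides apply the sextic (X^7 - X^6 - X^2 - 1) / (X - r); the coefficients agree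
   because the two sextics agree at 0, ..., 5, none of which is a root. *)
Lemma fq_quotient_factor (r a1 b1 a2 b2 a3 b3 : R) :
  FQpolyR r = 0 ->
  fq_factors r a1 b1 a2 b2 a3 b3 ->
  forall e n, fq_quotient r e n = quad_step a1 b1 (quad_step a2 b2 (quad_step a3 b3 e)) n.
Proof.
  intros Hr Hfac e n.
  set (s1 := 2 * a1). set (s2 := 2 * a2). set (s3 := 2 * a3).
  set (m1 := a1 ^ 2 + b1 ^ 2). set (m2 := a2 ^ 2 + b2 ^ 2). set (m3 := a3 ^ 2 + b3 ^ 2).
  set (t3 := - (s2 + s3)). set (t2 := m2 + m3 + s2 * s3).
  set (t1 := - (s2 * m3 + s3 * m2)). set (t0 := m2 * m3).
  set (c5 := t3 - s1). set (c4 := t2 - s1 * t3 + m1). set (c3 := t1 - s1 * t2 + m1 * t3).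
  set (c2 := t0 - s1 * t1 + m1 * t2). set (c1 := - s1 * t0 + m1 * t1). set (c0 := m1 * t0).
  destruct (quintic_coeffs_zero (r * (r ^ 4 * (r - 1) - 1) - c0) (r ^ 4 * (r - 1) - 1 - c1)
              (r ^ 3 * (r - 1) - c2) (r ^ 2 * (r - 1) - c3) (r * (r - 1) - c4) (r - 1 - c5))
    as (C0 & C1 & C2 & C3 & C4 & C5).
  { intros x Hx.
    assert (Hxr : x - r <> 0).
    { intros E. replace x with r in Hx by lra. unfold FQpolyR in Hr.
      destruct Hx as [-> | [-> | [-> | [-> | [-> | ->]]]]]; simpl in Hr; lra. }
    apply (Rmult_eq_reg_l (x - r)); [| exact Hxr]. rewrite Rmult_0_r.
    transitivity (FQpolyR x - FQpolyR r
      - (x - r) * root_quad a1 b1 x * root_quad a2 b2 x * root_quad a3 b3 x).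
    - unfold FQpolyR, root_quad, c0, c1, c2, c3, c4, c5, t0, t1, t2, t3, s1, s2, s3, m1, m2, m3.
      ring.
    - rewrite Hr, Hfac. ring. }
  unfold fq_quotient, quad_step. cbn [Nat.add].
  replace (r * (r ^ 4 * (r - 1) - 1)) with c0 by lra.
  replace (r ^ 4 * (r - 1) - 1) with c1 by lra.
  replace (r ^ 3 * (r - 1)) with c2 by lra.
  replace (r ^ 2 * (r - 1)) with c3 by lra.
  replace (r * (r - 1)) with c4 by lra.
  replace (r - 1) with c5 by lra.
  unfold c0, c1, c2, c3, c4, c5, t0, t1, t2, t3, s1, s2, s3, m1, m2, m3. ring.
Qed.

Lemma fq_asymptotics (u : nat -> R) (r a1 b1 a2 b2 a3 b3 : R) :
  fq_rec u -> (forall k, 0 <= u k) -> 0 < u 6%nat ->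
  FQpolyR r = 0 -> 1 < r ^ 4 * (r - 1) ->
  fq_factors r a1 b1 a2 b2 a3 b3 ->
  b1 <> 0 -> b2 <> 0 -> b3 <> 0 ->
  a2 ^ 2 + b2 ^ 2 < a1 ^ 2 + b1 ^ 2 -> a3 ^ 2 + b3 ^ 2 < a1 ^ 2 + b1 ^ 2 ->
  exists beta, 0 < beta /\
    exists K, forall n, Rabs (u n - beta * r ^ n) <= K * sqrt (a1 ^ 2 + b1 ^ 2) ^ n.
Proof.
  intros Hu Hu0 Hu6 Hr Hr4 Hfac Hb1 Hb2 Hb3 H21 H31.
  pose proof (gt1_of_quotient_coeff r Hr4) as Hr1.
  assert (Hpow0 : 0 < fq_quotient r (pow r) 0)
    by (apply fq_quotient_pos; [exact Hr4 | intros k; apply pow_le | apply pow_lt]; lra).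
  set (beta := fq_quotient r u 0 / fq_quotient r (pow r) 0).
  exists beta. split; [apply Rdiv_lt_0_compat; [apply fq_quotient_pos |]; assumption |].
  set (e := fun n => u n - beta * r ^ n).
  assert (He : forall n, quad_step a1 b1 (quad_step a2 b2 (quad_step a3 b3 e)) n = 0).
  { intros n. rewrite <- (fq_quotient_factor r a1 b1 a2 b2 a3 b3 Hr Hfac).
    rewrite fq_quotient_geometric
      by first [exact Hr | apply fq_rec_sub_scal; [exact Hu | apply fq_rec_pow, Hr]].
    unfold e. rewrite fq_quotient_sub_scal. unfold beta. field. lra. }
  assert (Hm1 : 0 < a1 ^ 2 + b1 ^ 2)
    by (pose proof (pow2_ge_0 a2); pose proof (pow2_ge_0 b2); lra).
  set (sg := sqrt (a1 ^ 2 + b1 ^ 2)).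
  assert (Hsg : 0 < sg) by (apply sqrt_lt_R0, Hm1).
  assert (Hsg2 : sg ^ 2 = a1 ^ 2 + b1 ^ 2) by (apply pow2_sqrt; lra).
  destruct (quad_homog_bound a1 b1 _ Hb1 He) as [K1 HK1].
  destruct (quad_inhomog_bound a2 b2 _ sg K1 Hb2 ltac:(lra) Hsg HK1) as [K2 HK2].
  destruct (quad_inhomog_bound a3 b3 e sg K2 Hb3 ltac:(lra) Hsg HK2) as [K3 HK3].
  exists K3. exact HK3.
Qed.

(** * Locating the complex roots *)

Definition fq_residual (A B : R) : R :=
  let p := FQpolyC (A, B) in fst p * fst p + snd p * snd p.

Definition near_sq_radius : R := / 10000.

Definition small_residual (A B : R) : Prop := fq_residual A B < near_sq_radius ^ 7.

Definition gauss_mul (z w : Z * Z) : Z * Z :=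
  ((fst z * fst w - snd z * snd w)%Z, (fst z * snd w + snd z * fst w)%Z).

Fixpoint gauss_pow (z : Z * Z) (n : nat) : Z * Z :=
  match n with O => (1%Z, 0%Z) | S k => gauss_mul z (gauss_pow z k) end.

(* [D ^ 7 * FQpolyC ((A + i B) / D)], computed exactly in Gaussian integers. *)
Definition fq_numer (A B D : Z) : Z * Z :=
  let z7 := gauss_pow (A, B) 7 in let z6 := gauss_pow (A, B) 6 in
  let z2 := gauss_pow (A, B) 2 in
  ((fst z7 - D * fst z6 - D ^ 5 * fst z2 - D ^ 7)%Z, (snd z7 - D * snd z6 - D ^ 5 * snd z2)%Z).

Lemma Cpow_rational (A B D : Z) (n : nat) : IZR D <> 0 ->
  Cpow (IZR A / IZR D, IZR B / IZR D) n =
  (IZR (fst (gauss_pow (A, B) n)) / IZR D ^ n, IZR (snd (gauss_pow (A, B) n)) / IZR D ^ n).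
Proof.
  intros HD. induction n as [|n IH].
  - simpl. f_equal; field.
  - simpl Cpow. rewrite IH. unfold Cmul, gauss_mul. simpl.
    rewrite !minus_IZR, !plus_IZR, !mult_IZR.
    f_equal; field; split; auto; apply pow_nonzero; auto.
Qed.

Lemma FQpolyC_rational (A B D : Z) : IZR D <> 0 ->
  FQpolyC (IZR A / IZR D, IZR B / IZR D) =
  (IZR (fst (fq_numer A B D)) / IZR D ^ 7, IZR (snd (fq_numer A B D)) / IZR D ^ 7).
Proof.
  intros HD. unfold FQpolyC. rewrite !Cpow_rational by exact HD. unfold fq_numer. cbv zeta.
  destruct (gauss_pow (A, B) 7) as [x7 y7], (gauss_pow (A, B) 6) as [x6 y6],
    (gauss_pow (A, B) 2) as [x2 y2].
  cbn [fst snd]. rewrite !minus_IZR, !mult_IZR.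
  change (D ^ 5)%Z with (D ^ Z.of_nat 5)%Z. change (D ^ 7)%Z with (D ^ Z.of_nat 7)%Z.
  rewrite <- !pow_IZR.
  f_equal; field; repeat split; auto; apply pow_nonzero; auto.
Qed.

Lemma fq_residual_rational_lt (A B D : Z) : (0 < D)%Z ->
  Z.ltb ((fst (fq_numer A B D) ^ 2 + snd (fq_numer A B D) ^ 2) * 10 ^ 28) (D ^ 14) = true ->
  small_residual (IZR A / IZR D) (IZR B / IZR D).
Proof.
  intros HD H. apply Z.ltb_lt, IZR_lt in H. assert (HD0 : 0 < IZR D) by (apply IZR_lt; lia).
  unfold small_residual, near_sq_radius, fq_residual. cbv zeta.
  replace ((/ 10000) ^ 7) with (/ 10 ^ 28) by field.
  rewrite FQpolyC_rational by lra.
  destruct (fq_numer A B D) as [X Y]. cbn [fst snd] in *.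
  change (10 ^ 28)%Z with (10 ^ Z.of_nat 28)%Z in H.
  change (D ^ 14)%Z with (D ^ Z.of_nat 14)%Z in H.
  change (X ^ 2)%Z with (X ^ Z.of_nat 2)%Z in H. change (Y ^ 2)%Z with (Y ^ Z.of_nat 2)%Z in H.
  rewrite mult_IZR, plus_IZR, <- !pow_IZR in H.
  assert (H7 : 0 < IZR D ^ 7) by (apply pow_lt; lra).
  assert (H10 : 0 < 10 ^ 28) by (apply pow_lt; lra).
  apply (Rmult_lt_reg_r (IZR D ^ 14 * 10 ^ 28));
    [apply Rmult_lt_0_compat; [apply pow_lt |]; lra |].
  replace ((IZR X / IZR D ^ 7 * (IZR X / IZR D ^ 7) + IZR Y / IZR D ^ 7 * (IZR Y / IZR D ^ 7))
            * (IZR D ^ 14 * 10 ^ 28)) with ((IZR X ^ 2 + IZR Y ^ 2) * 10 ^ 28) by (field; lra).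
  replace (/ 10 ^ 28 * (IZR D ^ 14 * 10 ^ 28)) with (IZR D ^ 14) by (field; lra).
  exact H.
Qed.

(* The roots of FQpolyC in the upper half-plane, to 16 decimals. *)
Definition ca1 : R := IZR 6790213438326961 / IZR 10000000000000000.
Definition cb1 : R := IZR 8318199878033884 / IZR 10000000000000000.
Definition ca2 : R := IZR (-8226996926659100) / IZR 10000000000000000.
Definition cb2 : R := IZR 5262533464376888 / IZR 10000000000000000.
Definition ca3 : R := IZR (-548392888400819) / IZR 10000000000000000.
Definition cb3 : R := IZR 8049216240285119 / IZR 10000000000000000.

Lemma fq_residual1 : small_residual ca1 cb1.
Proof. apply fq_residual_rational_lt; [lia | vm_compute; reflexivity]. Qed.
Lemma fq_residual2 : small_residual ca2 cb2.
Proof. apply fq_residual_rational_lt; [lia | vm_compute; reflexivity]. Qed.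
Lemma fq_residual3 : small_residual ca3 cb3.
Proof. apply fq_residual_rational_lt; [lia | vm_compute; reflexivity]. Qed.

Definition near (c v : R) : Prop := c - 1 / 100 <= v <= c + 1 / 100.

Lemma near_of_sq_dist (A B a b : R) :
  (A - a) * (A - a) + (B - b) * (B - b) <= near_sq_radius -> near A a /\ near B b.
Proof.
  unfold near_sq_radius, near. intros H.
  pose proof (Rle_0_sqr (A - a)). pose proof (Rle_0_sqr (B - b)). unfold Rsqr in *.
  split; split; nra.
Qed.

Lemma FQpolyC_conj (a b : R) :
  FQpolyC (a, - b) = (fst (FQpolyC (a, b)), - snd (FQpolyC (a, b))).
Proof. unfold FQpolyC, Cmul. simpl. f_equal; ring. Qed.

Lemma FQpolyC_real (x : R) : FQpolyC (x, 0) = (FQpolyR x, 0).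
Proof. unfold FQpolyC, FQpolyR, Cmul. simpl. f_equal; ring. Qed.

From mathcomp Require ssreflect ssrfun ssrbool eqtype ssrnat seq bigop ssralg ssrnum poly.
From mathcomp Require Rstruct complex.
(* Requiring ssreflect switches bullets off globally. *)
Set Bullet Behavior "Strict Subproofs".

Module ComplexRoots.
Import ssreflect ssrfun ssrbool eqtype ssrnat seq bigop ssralg ssrnum poly.
Import GRing.Theory Num.Theory.
Import Rstruct complex.
Local Open Scope ring_scope.
Local Open Scope complex_scope.

Definition fq_poly : {poly R[i]} := 'X^7 - 'X^6 - 'X^2 - 1.

Definition sqnorm (z : R[i]) : R := Re z * Re z + Im z * Im z.

Lemma Re_mul (z w : R[i]) : Re (z * w) = Re z * Re w - Im z * Im w.
Proof. by case: z => a b; case: w => c d. Qed.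

Lemma Im_mul (z w : R[i]) : Im (z * w) = Re z * Im w + Im z * Re w.
Proof. by case: z => a b; case: w => c d. Qed.

Lemma Cpow_complex (z : R[i]) (n : nat) : Cpow (Re z, Im z) n = (Re (z ^+ n), Im (z ^+ n)).
Proof.
  elim: n => [|n IH]; first by rewrite expr0.
  by rewrite exprS /= IH /Cmul /= Re_mul Im_mul.
Qed.

Lemma horner_fq_poly (z : R[i]) :
  fq_poly.[z] = Complex (fst (FQpolyC (Re z, Im z))) (snd (FQpolyC (Re z, Im z))).
Proof.
  rewrite /fq_poly !hornerE /FQpolyC !Cpow_complex /=.
  move: (z ^+ 7) (z ^+ 6) (z ^+ 2) => [a7 b7] [a6 b6] [a2 b2] /=.
  apply/eqP; rewrite eq_complex /= subr0; apply/andP; split; apply/eqP; reflexivity.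
Qed.

Lemma fq_poly_split :
  exists rs : seq R[i], fq_poly = \prod_(z <- rs) ('X - z%:P) /\ size rs = 7%N.
Proof.
  have Efq : fq_poly = 'X^7 + - ('X^6 + 'X^2 + 1) by rewrite /fq_poly !opprD !addrA.
  have Htail : (size (- ('X^6 + 'X^2 + 1) : {poly R[i]}) < size ('X^7 : {poly R[i]}))%N.
  { rewrite size_polyN size_polyXn. apply: (leq_ltn_trans (size_polyD _ _)). rewrite gtn_max.
    apply/andP; split; last by rewrite size_poly1.
    apply: (leq_ltn_trans (size_polyD _ _)). by rewrite !size_polyXn. }
  have [rs Hrs] := closed_field_poly_normal fq_poly.
  rewrite Efq lead_coefDl // lead_coefXn scale1r -Efq in Hrs.
  exists rs; split => //.
  have := size_polyXn R[i] 7. rewrite -(size_polyDl Htail) -Efq Hrs size_prod_XsubC. by case.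
Qed.

Lemma sqnormM (z w : R[i]) : sqnorm (z * w) = sqnorm z * sqnorm w.
Proof.
  rewrite /sqnorm Re_mul Im_mul. case: z => a b; case: w => c d /=. rewrite -!RealsE. ring.
Qed.

Lemma sqnorm_prod (s : seq R[i]) (F : R[i] -> R[i]) :
  sqnorm (\prod_(z <- s) F z) = \prod_(z <- s) sqnorm (F z).
Proof.
  elim: s => [|a s IH]; first by rewrite !big_nil /sqnorm /= -!RealsE; ring.
  by rewrite !big_cons sqnormM IH.
Qed.

Lemma pow_le_prod (s : seq R[i]) (F : R[i] -> R) (d : R) : Rle 0 d ->
  (forall z, z \in s -> Rle d (F z)) -> Rle (pow d (size s)) (\prod_(z <- s) F z).
Proof.
  move=> Hd. elim: s => [|a s IH] H; first by rewrite big_nil; apply: Rle_refl.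
  rewrite big_cons /= -RmultE.
  apply: Rmult_le_compat => //; first exact: pow_le.
  - by apply: H; rewrite in_cons eqxx.
  - by apply: IH => z Hz; apply: H; rewrite in_cons Hz orbT.
Qed.

(* |P(x)|^2 is the product of the squared distances from x to the seven roots. *)
Lemma root_near (rs : seq R[i]) (x : R[i]) (d : R) :
  fq_poly = \prod_(z <- rs) ('X - z%:P) -> size rs = 7%N -> Rle 0 d ->
  Rlt (sqnorm fq_poly.[x]) (pow d 7) -> exists2 z, z \in rs & Rle (sqnorm (x - z)) d.
Proof.
  move=> Hrs Hsz Hd Hlt. apply: NNPP => Hno.
  have Hfar : forall z, z \in rs -> Rle d (sqnorm (x - z)).
  { move=> z Hz. apply: Rnot_lt_le => Hc. apply: Hno. exists z => //. exact: Rlt_le. }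
  have Hprod : sqnorm fq_poly.[x] = \prod_(z <- rs) sqnorm (x - z).
  { rewrite Hrs horner_prod. under eq_bigr do rewrite hornerXsubC. by rewrite sqnorm_prod. }
  have := pow_le_prod rs (fun z => sqnorm (x - z)) d Hd Hfar.
  rewrite Hsz -Hprod. lra.
Qed.

Lemma root_located (rs : seq R[i]) (A B : R) :
  fq_poly = \prod_(w <- rs) ('X - w%:P) -> size rs = 7%N -> small_residual A B ->
  exists2 z, z \in rs & near A (Re z) /\ near B (Im z).
Proof.
  move=> Hrs Hsz Hres.
  have Hd : Rle 0 near_sq_radius by rewrite /near_sq_radius; lra.
  have Hlt : Rlt (sqnorm fq_poly.[Complex A B]) (pow near_sq_radius 7)
    by rewrite horner_fq_poly; exact: Hres.
  have [z Hz Hzd] := root_near rs _ _ Hrs Hsz Hd Hlt.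
  exists z => //. apply: near_of_sq_dist. move: Hzd. by case: z {Hz}.
Qed.

Lemma root_of_mem (rs : seq R[i]) (z : R[i]) :
  fq_poly = \prod_(w <- rs) ('X - w%:P) -> z \in rs -> is_FQroot (Re z, Im z).
Proof.
  move=> Hrs Hz. have : root fq_poly z by rewrite Hrs root_prod_XsubC.
  move/rootP; rewrite horner_fq_poly /is_FQroot.
  case: (FQpolyC (Re z, Im z)) => [u v] /= [-> ->]. reflexivity.
Qed.

Lemma mem_of_root (rs : seq R[i]) (a b : R) :
  fq_poly = \prod_(w <- rs) ('X - w%:P) -> is_FQroot (a, b) -> Complex a b \in rs.
Proof.
  move=> Hrs H. rewrite -root_prod_XsubC -Hrs. apply/rootP.
  rewrite horner_fq_poly. change (Re (Complex a b), Im (Complex a b)) with (a, b).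
  by rewrite H.
Qed.

Lemma prod_XsubC_uniq_sub (rs L : seq R[i]) : uniq L -> {subset L <= rs} ->
  (size rs <= size L)%N -> \prod_(z <- rs) ('X - z%:P) = \prod_(z <- L) ('X - z%:P).
Proof.
  move=> uL Hsub Hle. have [Hsize Heq] := uniq_min_size uL Hsub Hle.
  have urs : uniq rs by rewrite (uniq_size_uniq uL Heq) Hsize.
  by apply: perm_big; rewrite perm_sym; apply: uniq_perm.
Qed.

Lemma conj_pair_prod (x a b : R) (t : R[i]) :
  (x%:C - Complex a b) * ((x%:C - Complex a (- b)) * t) = (root_quad a b x)%:C * t.
Proof.
  rewrite mulrA. congr (_ * _).
  apply/eqP; rewrite eq_complex /=. apply/andP; split; apply/eqP;
  rewrite /root_quad -?RealsE; simpl; ring.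
Qed.

Lemma Re_realC_mul (c : R) (t : R[i]) : Re (c%:C * t) = Rmult c (Re t).
Proof. case: t => a b /=. rewrite -?RealsE. ring. Qed.

Lemma complex_neq (z w : R[i]) : Re z <> Re w \/ Im z <> Im w -> z != w.
Proof. move=> H; apply/eqP => E; rewrite E in H; tauto. Qed.

Ltac solve_complex_neq :=
  apply: complex_neq; rewrite /= -?RoppE; first [left; intro; lra | right; intro; lra].

Lemma fq_roots_located (r : R) : FQpolyR r = R0 ->
  exists a1 b1 a2 b2 a3 b3 : R,
    is_FQroot (a1, b1) /\ near ca1 a1 /\ near cb1 b1 /\ near ca2 a2 /\ near cb2 b2 /\
    near ca3 a3 /\ near cb3 b3 /\ fq_factors r a1 b1 a2 b2 a3 b3.
Proof.
  move=> Hr. have [rs [Hrs Hsz]] := fq_poly_split.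
  have [[a1 b1] Hw1 [N1 N1']] := root_located rs ca1 cb1 Hrs Hsz fq_residual1.
  have [[a2 b2] Hw2 [N2 N2']] := root_located rs ca2 cb2 Hrs Hsz fq_residual2.
  have [[a3 b3] Hw3 [N3 N3']] := root_located rs ca3 cb3 Hrs Hsz fq_residual3.
  have Hconj a b : Complex a b \in rs -> Complex a (- b) \in rs.
  { move=> H. apply: (mem_of_root _ _ _ Hrs).
    move: (root_of_mem rs _ Hrs H) => /=. rewrite /is_FQroot FQpolyC_conj => ->.
    by rewrite /= Ropp_0. }
  set L := [:: Complex r R0; Complex a1 b1; Complex a1 (- b1); Complex a2 b2;
               Complex a2 (- b2); Complex a3 b3; Complex a3 (- b3)].
  have HPL : fq_poly = \prod_(z <- L) ('X - z%:P).
  { rewrite Hrs; apply: prod_XsubC_uniq_sub; last by rewrite Hsz.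
    - move: N1 N1' N2 N2' N3 N3'.
      rewrite /near /ca1 /cb1 /ca2 /cb2 /ca3 /cb3 /= => N1 N1' N2 N2' N3 N3'.
      rewrite /L /= !inE !negb_or. repeat (apply/andP; split).
      all: try done. all: solve_complex_neq.
    - move=> z; rewrite !inE.
      move=> /or3P [/eqP->|/eqP->|/or3P [/eqP->|/eqP->|/or3P [/eqP->|/eqP->|/eqP->]]];
        rewrite ?Hw1 ?Hw2 ?Hw3 ?Hconj //.
      apply: (mem_of_root _ _ _ Hrs). by rewrite /is_FQroot FQpolyC_real Hr. }
  exists a1, b1, a2, b2, a3, b3.
  split; first exact: (root_of_mem rs _ Hrs Hw1).
  do 6 (split; first done).
  move=> x.
  have HPx : fq_poly.[x%:C] = \prod_(z <- L) (x%:C - z).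
  { rewrite {1}HPL horner_prod. apply: eq_bigr => z _. by rewrite hornerXsubC. }
  rewrite /L !big_cons big_nil !conj_pair_prod in HPx.
  have E : Re fq_poly.[x%:C] = FQpolyR x.
  { rewrite horner_fq_poly. change (Re x%:C, Im x%:C) with (x, IZR 0).
    by rewrite FQpolyC_real. }
  rewrite -E HPx. change (Complex r R0) with (r%:C). rewrite -rmorphB !Re_realC_mul /=.
  rewrite -?RealsE. ring.
Qed.
End ComplexRoots.

Lemma fq_factorization (r : R) : FQpolyR r = 0 ->
  exists a1 b1 a2 b2 a3 b3 : R,
    is_FQroot (a1, b1) /\ b1 <> 0 /\ b2 <> 0 /\ b3 <> 0 /\
    a2 ^ 2 + b2 ^ 2 < a1 ^ 2 + b1 ^ 2 /\ a3 ^ 2 + b3 ^ 2 < a1 ^ 2 + b1 ^ 2 /\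
    fq_factors r a1 b1 a2 b2 a3 b3.
Proof.
  intros Hr.
  destruct (ComplexRoots.fq_roots_located r Hr)
    as (a1 & b1 & a2 & b2 & a3 & b3 & Hroot & N1 & N1' & N2 & N2' & N3 & N3' & Hfac).
  unfold near, ca1, cb1, ca2, cb2, ca3, cb3 in *.
  exists a1, b1, a2, b2, a3, b3. repeat split; try assumption; try lra; simpl; nra.
Qed.

Lemma fq_max_root_coeff (r : R) : (forall x, FQpolyR x = 0 -> x <= r) -> 1 < r ^ 4 * (r - 1).
Proof.
  intros Hmax.
  assert (Hcont : continuity FQpolyR) by (intros x; unfold FQpolyR; reg).
  destruct (IVT FQpolyR (139 / 100) (14 / 10) Hcont) as [x [[Hx1 _] Hx]];
    [lra | unfold FQpolyR; lra | unfold FQpolyR; lra |].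
  specialize (Hmax x Hx).
  assert ((139 / 100) ^ 4 * (39 / 100) <= r ^ 4 * (r - 1))
    by (apply Rmult_le_compat; [lra | lra | apply pow_incr | ]; lra).
  lra.
Qed.

Lemma fq_rec_d : fq_rec (fun n => INR (d n)).
Proof. intros n. rewrite !(Nat.add_comm _ n), d_rec, !plus_INR. reflexivity. Qed.

Lemma d6_pos : 0 < INR (d 6).
Proof. replace (d 6) with 11%nat by (vm_compute; reflexivity). simpl. lra. Qed.

Lemma relative_error_bound (x : nat -> R) (beta r1 r2 K s : R) :
  0 < beta -> 0 < r1 -> 0 <= s <= r2 -> (forall n, Rabs (x n) <= K * s ^ n) ->
  forall n, Rabs (x n) <= K / beta * (beta * r1 ^ n) * (r2 / r1) ^ n.
Proof.
  intros Hbeta Hr1 Hs Hx n.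
  assert (HK : 0 <= K) by (pose proof (Rle_trans _ _ _ (Rabs_pos _) (Hx 0%nat)); simpl in *; lra).
  replace (K / beta * (beta * r1 ^ n) * (r2 / r1) ^ n) with (K * r2 ^ n).
  - eapply Rle_trans; [apply Hx |].
    apply Rmult_le_compat_l; [exact HK |]. apply pow_incr, Hs.
  - unfold Rdiv. rewrite Rpow_mult_distr, pow_inv. field.
    split; [apply pow_nonzero |]; lra.
Qed.

Theorem mainTheorem11 (r1 r2 : R)
  (Hr1root : FQpolyR r1 = 0)
  (Hr1max : forall x : R, FQpolyR x = 0 -> x <= r1)
  (Hr2ex : exists z : R * R, is_FQroot z /\ snd z <> 0 /\ Cmod z = r2)
  (Hr2max : forall z : R * R, is_FQroot z -> z <> (r1, 0) -> Cmod z <= r2) :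
  exists beta1 : R, 0 < beta1 /\
    exists (C : R) (N : nat), forall n : nat, (N <= n)%nat ->
      Rabs (INR (d n) - beta1 * r1 ^ n) <= C * (beta1 * r1 ^ n) * (r2 / r1) ^ n.
Proof.
  pose proof (fq_max_root_coeff r1 Hr1max) as Hr4.
  destruct (fq_factorization r1 Hr1root)
    as (a1 & b1 & a2 & b2 & a3 & b3 & Hroot1 & Hb1 & Hb2 & Hb3 & H21 & H31 & Hfac).
  destruct (fq_asymptotics (fun n => INR (d n)) r1 a1 b1 a2 b2 a3 b3 fq_rec_d
              (fun k => pos_INR (d k)) d6_pos Hr1root Hr4 Hfac Hb1 Hb2 Hb3 H21 H31)
    as [beta [Hbeta [K HK]]].
  assert (Hmod : sqrt (a1 ^ 2 + b1 ^ 2) <= r2).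
  { apply (Hr2max (a1, b1) Hroot1). intros E. injection E as _ E. exact (Hb1 E). }
  exists beta. split; [exact Hbeta |]. exists (K / beta), 0%nat. intros n _.
  apply (relative_error_bound (fun k => INR (d k) - beta * r1 ^ k) beta r1 r2 K
           (sqrt (a1 ^ 2 + b1 ^ 2))); try assumption.
  - pose proof (gt1_of_quotient_coeff r1 Hr4). lra.
  - split; [apply sqrt_pos | exact Hmod].
Qed.
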